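(* Let $G$ be a graph of order $n$ with no isolated vertices and maximum degree $\Delta$. Then $\gamma_{\rm gr}^t(G) \ge \frac{n}{\Delta}$. Moreover, if $G$ is connected and $\gamma_{\rm gr}^t(G) = \frac{n}{\Delta}$, then $G \cong K_{\Delta,\Delta}$.
   Context: All graphs are finite, simple, without isolated vertices. $N(v)$ denotes the open neighborhood of $v$. A sequence $S=(v_1,\ldots,v_k)$ of distinct vertices of $G$ is a legal (open neighborhood) sequence if $N(v_i)\setminus \bigcup_{j=1}^{i-1} N(v_j)\neq\emptyset$ for every $i\in\{2,\ldots,k\}$. It is a total dominating sequence if moreover the set $\{v_1,\ldots,v_k\}$ is a total dominating set of $G$ (every vertex of $G$ has a neighbor in it). The Grundy total domination number $\gamma_{\rm gr}^t(G)$ is the maximum length of a total dominating sequence of $G$. *)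

(* Simple graphs: symmetric irreflexive e : rel T on T : finType. *)
From mathcomp Require Import all_boot.
Set Implicit Arguments. Unset Strict Implicit. Unset Printing Implicit Defensive.

Section Graph.
Variables (T : finType) (e : rel T).

Definition nbhd (v : T) : {set T} := [set u | e v u].

Definition maxdeg : nat := \max_(v : T) #|nbhd v|.

Fixpoint legal_from (D : {set T}) (s : seq T) : bool :=
  match s with
  | [::] => true
  | x :: s' => ~~ (nbhd x \subset D) && legal_from (D :|: nbhd x) s'
  end.

(* legal open neighbourhood sequence: distinct vertices, and for i >= 2,
   N(v_i) \ (N(v_1) u ... u N(v_{i-1})) is nonempty *)
Definition legal_seq (s : seq T) : bool :=
  uniq s && match s with [::] => true | x :: s' => legal_from (nbhd x) s' end.

Definition total_dom (s : seq T) : bool := [forall v, has (e v) s].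

Definition tds (s : seq T) : bool := legal_seq s && total_dom s.

(* Grundy total domination number: maximum length of a total dominating
   sequence (lengths are bounded by #|T| since entries are distinct). *)
Definition grundy_tdom : nat :=
  \max_(k < #|T|.+1 | [exists t : k.-tuple T, tds t]) (k : nat).

End Graph.

Definition Kbip (m : nat) : rel ('I_m + 'I_m)%type :=
  fun x y => match x, y with
             | inl _, inr _ | inr _, inl _ => true
             | _, _ => false
             end.

Arguments Kbip m : clear implicits.

Definition graph_iso (T T' : finType) (e : rel T) (e' : rel T') : Prop :=
  exists f : T -> T', bijective f /\ forall u v, e' (f u) (f v) = e u v.

From mathcomp Require Import all_boot.
From mathcomp Require Import zify.
Set Implicit Arguments. Unset Strict Implicit. Unset Printing Implicit Defensive.

(* Any legal sequence extends greedily to a total dominating sequence: while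
   some vertex v is undominated, append a neighbour of v, which is legal since
   its neighbourhood contains v.  Each new vertex adds at most Delta vertices to
   the union of the neighbourhoods, so extending the sequence (x) gives
   n <= deg x + (gr - 1) Delta <= gr Delta.  If n = gr Delta, extending (x)
   forces deg x = Delta, and extending (x, y) with N(y) not inside N(x) forces
   N(x) and N(y) to be disjoint.  Hence vertices with a common neighbour have
   equal neighbourhoods, and a connected graph with this property is complete
   bipartite, with sides N(y) and N(x) for any edge xy. *)

Section GreedyExtension.

Variables (T : finType) (e : rel T).

Lemma card_nbhd_le_maxdeg x : #|nbhd e x| <= maxdeg e.
Proof. exact: (@leq_bigmax _ (fun v => #|nbhd e v|)). Qed.

Lemma legal_from_cat (D : {set T}) (s t : seq T) :
  legal_from e D (s ++ t) =
  legal_from e D s && legal_from e (D :|: \bigcup_(x <- s) nbhd e x) t.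
Proof.
elim: s D => [|x s IH] D /=; first by rewrite big_nil setU0.
by rewrite IH big_cons setUA andbA.
Qed.

Lemma card_setU_bigcup_nbhd_le (D : {set T}) (s : seq T) :
  #|D :|: \bigcup_(x <- s) nbhd e x| <= #|D| + size s * maxdeg e.
Proof.
elim: s D => [|x s IH] D /=; first by rewrite big_nil setU0 addn0.
rewrite big_cons setUA mulSn addnA.
apply: leq_trans (IH _) _; rewrite leq_add2r.
apply: leq_trans (leq_card_setU _ _) _.
by rewrite leq_add2l card_nbhd_le_maxdeg.
Qed.

Lemma size_tds_le_grundy (t : seq T) : tds e t -> size t <= grundy_tdom e.
Proof.
move=> tds_t; have uniq_t : uniq t by case/andP: tds_t => /andP [].
have lt_t : size t < #|T|.+1 by rewrite ltnS -(card_uniqP uniq_t) max_card.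
apply: (@leq_bigmax_cond _ _ (fun k : 'I_#|T|.+1 => nat_of_ord k) (Ordinal lt_t)).
by apply/existsP; exists (in_tuple t).
Qed.

Hypothesis e_sym : symmetric e.
Hypothesis no_iso : forall v : T, exists u, e v u.

Lemma total_dom_of_bigcup_nbhd (s : seq T) :
  \bigcup_(x <- s) nbhd e x = setT -> total_dom e s.
Proof.
move=> cover_s; apply/forallP => v; apply/hasP.
have : v \in \bigcup_(x <- s) nbhd e x by rewrite cover_s inE.
by rewrite bigcup_seq => /bigcupP [x xs]; rewrite inE e_sym; exists x.
Qed.

(* [U] records the vertices already used, so that the extension stays
   duplicate-free: a vertex whose neighbourhood lies in [D] is never legal. *)
Lemma legal_from_extend (D : {set T}) (U : seq T) :
  uniq U -> (forall x, x \in U -> nbhd e x \subset D) ->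
  exists2 t, legal_from e D t && uniq (U ++ t) &
             D :|: \bigcup_(x <- t) nbhd e x = setT.
Proof.
have [n] := ubnP #|~: D|; elim: n D U => // n IH D U /ltnSE le_Dn uniq_U sub_U.
case: (pickP [pred v | v \notin D]) => [v /= vD | allD]; last first.
  exists [::]; first by rewrite cats0 uniq_U.
  rewrite big_nil setU0; apply/setP => w.
  by rewrite inE; apply/negbFE/allD.
have [u euv] := no_iso v.
have new_u : ~~ (nbhd e u \subset D).
  by apply/subsetPn; exists v; rewrite // inE e_sym.
have uU : u \notin U by apply: contra new_u => /sub_U.
have lt_card_setC : #|~: (D :|: nbhd e u)| < #|~: D|.
  apply: proper_card; apply/properP; split; first by rewrite setCS subsetUl.
  by exists v; rewrite !inE ?vD // negb_or vD -e_sym euv.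
have [|||t /andP [legal_t uniq_t] cover_t] := IH (D :|: nbhd e u) (u :: U).
- exact: leq_trans lt_card_setC le_Dn.
- by rewrite /= uU.
- move=> x; rewrite inE => /predU1P [-> | xU]; first exact: subsetUr.
  exact: subset_trans (sub_U x xU) (subsetUl _ _).
exists (u :: t); last by rewrite big_cons setUA.
rewrite /= new_u legal_t /= -cat1s.
by rewrite (perm_uniq (permEl (perm_catCA U [:: u] t))).
Qed.

Lemma legal_seq_grundy_bound (p : seq T) : legal_seq e p -> p != [::] ->
  #|T| + size p * maxdeg e <=
  #|\bigcup_(x <- p) nbhd e x| + grundy_tdom e * maxdeg e.
Proof.
case: p => [|x p] // /andP [uniq_p legal_p] _.
set D := \bigcup_(y <- x :: p) nbhd e y.
have sub_D y : y \in x :: p -> nbhd e y \subset D.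
  by move=> yp; rewrite /D bigcup_seq (bigcup_sup _ yp).
have [t /andP [legal_t uniq_t] cover_t] := legal_from_extend uniq_p sub_D.
have tds_pt : tds e (x :: p ++ t).
  have D_cons : D = nbhd e x :|: \bigcup_(y <- p) nbhd e y by rewrite /D big_cons.
  rewrite /tds /legal_seq uniq_t legal_from_cat legal_p -D_cons legal_t.
  by apply: total_dom_of_bigcup_nbhd; rewrite -cat_cons big_cat.
have := size_tds_le_grundy tds_pt; rewrite -cat_cons size_cat => le_gr.
have := leq_mul le_gr (leqnn (maxdeg e)); rewrite mulnDl.
have := card_setU_bigcup_nbhd_le D t; rewrite cover_t cardsT.
lia.
Qed.

Lemma card_le_nbhd_grundy x :
  #|T| + maxdeg e <= #|nbhd e x| + grundy_tdom e * maxdeg e.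
Proof.
by have := @legal_seq_grundy_bound [:: x] isT isT; rewrite big_seq1 mul1n.
Qed.

Lemma card_le_nbhdU_grundy x y : ~~ (nbhd e y \subset nbhd e x) ->
  #|T| + 2 * maxdeg e <=
  #|nbhd e x :|: nbhd e y| + grundy_tdom e * maxdeg e.
Proof.
move=> new_y; have xy : x != y by apply: contraNneq new_y => ->.
have legal_xy : legal_seq e [:: x; y] by rewrite /legal_seq /= inE xy new_y.
by have := legal_seq_grundy_bound legal_xy isT; rewrite big_cons big_seq1.
Qed.

Lemma card_le_grundy_maxdeg : #|T| <= grundy_tdom e * maxdeg e.
Proof.
case: (pickP (@predT T)) => [x _ | T0]; last by rewrite (eq_card0 T0).
have := card_le_nbhd_grundy x; have := card_nbhd_le_maxdeg x; lia.
Qed.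

End GreedyExtension.

Section ExtremalGraphs.

Variables (T : finType) (e : rel T).
Hypothesis e_sym : symmetric e.
Hypothesis no_iso : forall v : T, exists u, e v u.
Hypothesis grundy_extremal : grundy_tdom e * maxdeg e = #|T|.

Lemma extremal_regular x : #|nbhd e x| = maxdeg e.
Proof.
apply/eqP; rewrite eqn_leq card_nbhd_le_maxdeg /=.
have := card_le_nbhd_grundy e_sym no_iso x; rewrite grundy_extremal; lia.
Qed.

Lemma extremal_twins x y z : e x z -> e y z -> nbhd e x = nbhd e y.
Proof.
move=> exz eyz; have [sub_yx | new_y] := boolP (nbhd e y \subset nbhd e x).
  by apply/eqP; rewrite eq_sym eqEcard sub_yx !extremal_regular leqnn.
have nbhdI0 : #|nbhd e x :&: nbhd e y| = 0.
  have := card_le_nbhdU_grundy e_sym no_iso new_y.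
  have := cardsUI (nbhd e x) (nbhd e y).
  rewrite grundy_extremal !extremal_regular; lia.
have : z \in nbhd e x :&: nbhd e y by rewrite !inE exz eyz.
by move/eqP: nbhdI0; rewrite cards_eq0 => /eqP ->; rewrite inE.
Qed.

End ExtremalGraphs.

Section TwinClosedGraphs.

Variables (T : finType) (e : rel T).
Hypotheses (e_sym : symmetric e) (e_irr : irreflexive e).
Hypothesis e_connected : forall u v : T, connect e u v.
Hypothesis twins : forall x y z, e x z -> e y z -> nbhd e x = nbhd e y.
Variables (x0 y0 : T).
Hypothesis e_x0y0 : e x0 y0.

Lemma nbhd_of_nbhd_y0 u : u \in nbhd e y0 -> nbhd e u = nbhd e x0.
Proof. by rewrite inE e_sym => /twins; apply. Qed.

Lemma nbhd_of_nbhd_x0 u : u \in nbhd e x0 -> nbhd e u = nbhd e y0.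
Proof. by rewrite inE e_sym => /twins; apply; rewrite e_sym. Qed.

Lemma twin_closed_setC_nbhd : ~: nbhd e y0 = nbhd e x0.
Proof.
apply/setP => u; rewrite inE; apply/idP/idP => [uA | uB].
  have closedS : closed e (nbhd e y0 :|: nbhd e x0).
    apply: (intro_closed (sym_connect_sym e_sym)) => w w' eww'.
    have w'_w : w' \in nbhd e w by rewrite inE.
    rewrite in_setU => /orP [/nbhd_of_nbhd_y0 | /nbhd_of_nbhd_x0] nbhd_w;
      by move: w'_w; rewrite nbhd_w in_setU => ->; rewrite ?orbT.
  have := closed_connect closedS (e_connected x0 u).
  rewrite !in_setU (negbTE uA) /= [x0 \in _]inE e_sym e_x0y0 /=.
  by move=> <-.
apply/negP => uA; have := nbhd_of_nbhd_y0 uA.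
rewrite nbhd_of_nbhd_x0 // => nbhd_eq.
have : x0 \in nbhd e x0 by rewrite -nbhd_eq inE e_sym.
by rewrite inE e_irr.
Qed.

Lemma twin_closed_bipartite u v :
  e u v = ((u \in nbhd e y0) != (v \in nbhd e y0)).
Proof.
have -> : e u v = (v \in nbhd e u) by rewrite inE.
have [uA | uB] := boolP (u \in nbhd e y0).
  by rewrite nbhd_of_nbhd_y0 // -twin_closed_setC_nbhd !inE; case: (e y0 v).
rewrite nbhd_of_nbhd_x0; last by rewrite -twin_closed_setC_nbhd inE.
by case: (v \in _).
Qed.

End TwinClosedGraphs.

Lemma bipartition_iso_Kbip (T : finType) (e : rel T) (A : {set T}) (m : nat) :
  #|A| = m -> #|~: A| = m -> (forall u v, e u v = ((u \in A) != (v \in A))) ->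
  graph_iso e (Kbip m).
Proof.
move=> cardA cardAc bipA.
pose g (i : 'I_m + 'I_m) : T := match i with
  | inl j => enum_val (cast_ord (esym cardA) j)
  | inr j => enum_val (cast_ord (esym cardAc) j) end.
have mem_g i : (g i \in A) = (if i is inl _ then true else false).
  case: i => j /=; first exact: enum_valP.
  by apply/negbTE; have := enum_valP (cast_ord (esym cardAc) j); rewrite inE.
have inj_g : injective g.
  move=> i j gij; have := mem_g i; rewrite gij mem_g.
  by case: i j gij => i [] j //= /enum_val_inj /cast_ord_inj -> .
have [f gK fK] : bijective g.
  apply: inj_card_bij inj_g _.
  by rewrite card_sum !card_ord -{1}cardA -cardAc cardsC.
exists f; split; first by exists g.
move=> u v; rewrite -{2}(fK u) -{2}(fK v) bipA !mem_g.
by case: (f u); case: (f v).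
Qed.

Theorem mainTheorem1 (T : finType) (e : rel T)
  (e_sym : symmetric e) (e_irr : irreflexive e)
  (no_iso : forall v : T, exists u, e v u) :
  #|T| <= grundy_tdom e * maxdeg e /\
  ((forall u v : T, connect e u v) ->
   grundy_tdom e * maxdeg e = #|T| ->
   graph_iso e (Kbip (maxdeg e))).
Proof.
split; first exact: card_le_grundy_maxdeg.
move=> e_connected grundy_extremal.
have regular := extremal_regular e_sym no_iso grundy_extremal.
have twins := extremal_twins e_sym no_iso grundy_extremal.
case: (pickP (@predT T)) => [x0 _ | T0].
  have [y0 e_x0y0] := no_iso x0.
  apply: (@bipartition_iso_Kbip _ _ (nbhd e y0)); first exact: regular.
    by rewrite (twin_closed_setC_nbhd e_sym e_irr e_connected twins e_x0y0).
  exact: (twin_closed_bipartite e_sym e_irr e_connected twins e_x0y0).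
have maxdeg0 : maxdeg e = 0.
  by apply/eqP; rewrite -leqn0; apply/bigmax_leqP => v; have := T0 v.
apply: (@bipartition_iso_Kbip _ _ set0); rewrite ?maxdeg0 ?cards0 //.
  by rewrite setC0 cardsT (eq_card0 T0).
by move=> u; have := T0 u.
Qed.
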